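(* Let $E:\mathcal D(\mathcal H)\to[0,\infty)$ be a convex weak entanglement measure, and let $D$ be a contractive distance, convex in each argument, such that for every state the infimum defining $E_D$ is attained by some separable state. Let $\rho$ be a state with $E_D(\rho)>0$ and let $0\le\epsilon\le E_D(\rho)$. Then $$\inf\{E(\tau)\mid \tau\in\mathcal D(\mathcal H),\ E_D(\tau)=E_D(\rho)-\epsilon\}\ \le\ E^{(D)}_\epsilon(\rho)\ \le\ \Big(1-\frac{\epsilon}{E_D(\rho)}\Big)E(\rho).$$
   Context: $\mathcal H$ is a finite-dimensional multipartite Hilbert space, $\mathcal D(\mathcal H)$ its density matrices, $\mathcal S$ the separable states (convex combinations of product states). A distance $D$ is a metric on density matrices; convex in each argument means $D(p\rho_1+(1-p)\rho_2,\sigma)\le pD(\rho_1,\sigma)+(1-p)D(\rho_2,\sigma)$; contractive means $D(\Lambda[\rho],\Lambda[\sigma])\le D(\rho,\sigma)$ for every CPT map $\Lambda$. $E$ is a weak entanglement measure if $E(\rho)=0$ for all separable $\rho$ and $E(\Lambda_{\mathrm{LOCC}}[\rho])\le E(\rho)$ for every trace-preserving LOCC operation; convex means $E(p\rho_1+(1-p)\rho_2)\le pE(\rho_1)+(1-p)E(\rho_2)$. $E_D(\rho)=\inf_{\sigma\in\mathcal S}D(\rho,\sigma)$. For $\epsilon\ge0$, $E^{(D)}_\epsilon(\rho)=\inf\{E(\sigma)\mid \sigma\in\mathcal D(\mathcal H),\ D(\rho,\sigma)\le\epsilon\}$. *)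

(* Complex scalars: an abstract numClosedFieldType C whose
   real part is order-complete (see [real_complete]); this pins C down to the
   complex numbers up to isomorphism. *)
From HB Require Import structures.
From mathcomp Require Import all_boot all_order all_algebra.
From Stdlib Require Import ClassicalEpsilon.
Set Implicit Arguments. Unset Strict Implicit. Unset Printing Implicit Defensive.
Import Order.TTheory GRing.Theory Num.Theory.
Local Open Scope ring_scope.

Section Quantum.
Variable C : numClosedFieldType.

Definition is_inf (A : C -> Prop) (m : C) : Prop :=
  (forall a, A a -> m <= a) /\ (forall b, (forall a, A a -> b <= a) -> b <= m).

Definition real_complete : Prop :=
  forall A : C -> Prop, (exists a, A a) ->
    (exists b, b \is Num.real /\ forall a, A a -> b <= a) ->
    exists m, is_inf A m.

(* the infimum (meaningful whenever it exists, e.g. for nonempty sets bounded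
   below when [real_complete] holds) *)
Definition Inf (A : C -> Prop) : C := epsilon (inhabits 0) (is_inf A).

Definition Mat (U : finType) := U -> U -> C.

Definition madd U (A B : Mat U) : Mat U := fun s t => A s t + B s t.
Definition mscale U (a : C) (A : Mat U) : Mat U := fun s t => a * A s t.
Definition mtr U (A : Mat U) : C := \sum_(t : U) A t t.

Definition psd U (A : Mat U) : Prop :=
  (forall s t, A t s = (A s t)^*) /\
  (forall v : U -> C, 0 <= \sum_(s : U) \sum_(t : U) (v s)^* * A s t * v t).

Definition density U (A : Mat U) : Prop := psd A /\ mtr A = 1.

Definition linmap U (F : Mat U -> Mat U) : Prop :=
  forall a A B, F (madd (mscale a A) B) = madd (mscale a (F A)) (F B).

(* F (x) id_m acting on matrices of H (x) C^m *)
Definition ampl U (m : nat) (F : Mat U -> Mat U) (X : Mat (U * 'I_m)%type)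
  : Mat (U * 'I_m)%type :=
  fun x y => F (fun s t => X (s, x.2) (t, y.2)) x.1 y.1.

Definition cp U (F : Mat U -> Mat U) : Prop :=
  linmap F /\ forall (m : nat) (X : Mat (U * 'I_m)%type),
    psd X -> psd (ampl F X).

Definition tp U (F : Mat U -> Mat U) : Prop := forall X, mtr (F X) = mtr X.

Definition cpt U (F : Mat U -> Mat U) : Prop := cp F /\ tp F.

Definition sum_maps U (Fs : seq (Mat U -> Mat U)) (X : Mat U) : Mat U :=
  fun s t => \sum_(F <- Fs) F X s t.

(* parties I, local bases L i; the global basis is the product of local bases *)
Variables (I : finType) (L : I -> finType).
Definition T : finType := {dffun forall i : I, L i}.

Definition upd (s : T) (k : I) (a : L k) : T :=
  [ffun j => dfwith (fun j => s j) a j].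

(* F (x) id on the other parties, F acting on party k *)
Definition lext (k : I) (F : Mat (L k) -> Mat (L k)) (X : Mat T) : Mat T :=
  fun s t => F (fun a b => X (upd s a) (upd t b)) (s k) (t k).

Definition product_state (rho : Mat T) : Prop :=
  exists r : forall i : I, Mat (L i),
    (forall i, density (r i)) /\
    forall s t, rho s t = \prod_(i : I) r i (s i) (t i).

Definition separable (rho : Mat T) : Prop :=
  exists (n : nat) (p : 'I_n -> C) (r : 'I_n -> Mat T),
    (forall j, 0 <= p j) /\ \sum_(j < n) p j = 1 /\
    (forall j, product_state (r j)) /\
    forall s t, rho s t = \sum_(j < n) p j * r j s t.

Definition local_instrument (k : I) (Fs : seq (Mat (L k) -> Mat (L k))) : Prop :=
  (forall F, List.In F Fs -> cp F) /\ tp (sum_maps Fs).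

(* LOCC instruments (finite-round protocols): start from the trivial
   instrument and repeatedly let some party, chosen depending on the branch,
   apply a local instrument on one branch (outcome) of the protocol tree. *)
Inductive locc_instr : seq (Mat T -> Mat T) -> Prop :=
| locc_id : locc_instr [:: id]
| locc_refine (s1 s2 : seq (Mat T -> Mat T)) (Eb : Mat T -> Mat T)
    (k : I) (Fs : seq (Mat (L k) -> Mat (L k))) :
    locc_instr (s1 ++ Eb :: s2) -> local_instrument Fs ->
    locc_instr (s1 ++ [seq (lext F) \o Eb | F <- Fs] ++ s2).

(* trace-preserving LOCC operation: coarse-graining of an LOCC instrument *)
Definition locc (Lam : Mat T -> Mat T) : Prop :=
  exists s, locc_instr s /\ forall X, Lam X = sum_maps s X.

Definition weak_ent_measure (E : Mat T -> C) : Prop :=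
  (forall rho, separable rho -> E rho = 0) /\
  (forall Lam rho, locc Lam -> density rho -> E (Lam rho) <= E rho).

Definition convex_measure (E : Mat T -> C) : Prop :=
  forall (p : C) rho1 rho2, density rho1 -> density rho2 -> 0 <= p <= 1 ->
    E (madd (mscale p rho1) (mscale (1 - p) rho2)) <= p * E rho1 + (1 - p) * E rho2.

Definition metric_on_states (D : Mat T -> Mat T -> C) : Prop :=
  (forall rho sigma, density rho -> density sigma -> 0 <= D rho sigma) /\
  (forall rho sigma, density rho -> density sigma -> (D rho sigma = 0 <-> rho = sigma)) /\
  (forall rho sigma, density rho -> density sigma -> D rho sigma = D sigma rho) /\
  (forall rho sigma tau, density rho -> density sigma -> density tau ->
     D rho tau <= D rho sigma + D sigma tau).

Definition convex_each_arg (D : Mat T -> Mat T -> C) : Prop :=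
  (forall (p : C) rho1 rho2 sigma, density rho1 -> density rho2 -> density sigma ->
     0 <= p <= 1 ->
     D (madd (mscale p rho1) (mscale (1 - p) rho2)) sigma
       <= p * D rho1 sigma + (1 - p) * D rho2 sigma) /\
  (forall (p : C) rho sigma1 sigma2, density rho -> density sigma1 -> density sigma2 ->
     0 <= p <= 1 ->
     D rho (madd (mscale p sigma1) (mscale (1 - p) sigma2))
       <= p * D rho sigma1 + (1 - p) * D rho sigma2).

Definition contractive (D : Mat T -> Mat T -> C) : Prop :=
  forall Lam rho sigma, cpt Lam -> density rho -> density sigma ->
    D (Lam rho) (Lam sigma) <= D rho sigma.

Definition ED (D : Mat T -> Mat T -> C) (rho : Mat T) : C :=
  Inf (fun x => exists sigma, separable sigma /\ x = D rho sigma).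

Definition Eeps (E : Mat T -> C) (D : Mat T -> Mat T -> C) (eps : C) (rho : Mat T) : C :=
  Inf (fun x => exists sigma, density sigma /\ D rho sigma <= eps /\ x = E sigma).

End Quantum.

(* The whole argument rests on one construction: mixing a state r with a
   closest separable state s_r, tau_q = q r + (1 - q) s_r, lowers the
   distance-based entanglement linearly, E_D(tau_q) = q E_D(r), while
   D(r, tau_q) <= (1 - q) E_D(r) and, by convexity of E, E(tau_q) <= q E(r).
   - With r = rho and q = 1 - eps/E_D(rho) this yields a state within
     distance eps of rho, giving the upper bound on E^{(D)}_eps(rho) and
     showing the level set {E_D = E_D(rho) - eps} is nonempty.
   - Since E_D is 1-Lipschitz for D, every sigma with D(rho, sigma) <= eps
     has E_D(sigma) >= E_D(rho) - eps; mixing sigma down to that level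
     gives tau in the level set with E(tau) <= E(sigma): the lower bound. *)
From HB Require Import structures.
From mathcomp Require Import all_boot all_order all_algebra.
From Stdlib Require Import ClassicalEpsilon.
Set Implicit Arguments. Unset Strict Implicit. Unset Printing Implicit Defensive.
Import Order.TTheory GRing.Theory Num.Theory.
Local Open Scope ring_scope.
Local Open Scope sesquilinear_scope.

Lemma prod_sum_dep (R : comNzRingType) (I : finType) (K : I -> finType)
  (F : forall i, K i -> R) :
  \prod_(i : I) \sum_(k : K i) F i k =
  \sum_(f : {dffun forall i, K i}) \prod_(i : I) F i (f i).
Proof.
pose P := fun i => [ffun k : K i => F i k].
transitivity (\prod_(i : I) \sum_(j in tagged_with K i) untag 0 (P i) j).
  apply: eq_bigr => i _; rewrite -(big_tag P i).
  by apply: eq_bigr => k _; rewrite ffunE.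
rewrite (bigA_distr_big_dep (fun i j => j \in tagged_with K i)).
transitivity (\sum_(t : fprod K) \prod_(i in I) P i (t i)).
  by rewrite (@big_fprod R 0 1 *%R +%R I K P).
rewrite (reindex (@fprod_of_dffun I K)); last exact/onW_bij/fprod_of_dffun_bij.
apply: eq_bigr => f _; apply: eq_bigr => i _.
by rewrite ffunE /fprod_of_dffun fprodE.
Qed.

Section PositiveMatrices.
Variable C : numClosedFieldType.

Lemma sum_enum (U : finType) (G : U -> C) :
  \sum_(s : U) G s = \sum_(i < #|U|) G (enum_val i).
Proof. by rewrite (reindex (@enum_val U U)) //=; apply/onW_bij/enum_val_bij. Qed.

Lemma psd_decomp (U : finType) (A : Mat C U) : psd A ->
  {d : 'I_#|U| -> C & {Q : 'I_#|U| -> U -> C | (forall k, 0 <= d k) /\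
   forall a b, A a b = \sum_k d k * (Q k a)^* * Q k b}}.
Proof.
case=> Hherm Hpos.
pose M : 'M[C]_#|U| := \matrix_(i, j) A (enum_val i) (enum_val j).
have HM : M \is hermsymmx.
  apply/is_hermitianmxP; rewrite expr0 scale1r; apply/matrixP => i j.
  by rewrite !mxE Hherm.
have /orthomx_spectralP eM := hermitian_normalmx HM.
set P := spectralmx M in eM; set d := spectral_diag M in eM.
have Pu : P \is unitarymx by apply: spectral_unitarymx.
rewrite invmx_unitary // in eM.
have d_diag k : d 0 k = (P *m M *m P^t*) k k.
  rewrite eM !mulmxA (unitarymxP Pu) mul1mx -mulmxA (unitarymxP Pu).
  by rewrite mulmx1 mxE eqxx mulr1n.
exists (fun k => d 0 k), (fun k a => P k (enum_rank a)); split.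
  move=> k; rewrite d_diag.
  have := Hpos (fun u => (P k (enum_rank u))^*).
  rewrite sum_enum; under eq_bigr do rewrite sum_enum.
  rewrite exchange_big /= mxE.
  under [X in _ -> _ <= X]eq_bigr do rewrite !mxE big_distrl /=.
  congr (_ <= _); apply: eq_bigr => j _; apply: eq_bigr => i _.
  by rewrite !enum_valK conjCK !mxE.
move=> a b; rewrite -{1}(enum_rankK a) -{1}(enum_rankK b).
have -> : A (enum_val (enum_rank a)) (enum_val (enum_rank b)) =
          M (enum_rank a) (enum_rank b) by rewrite mxE.
rewrite eM mxE; apply: eq_bigr => k _.
by rewrite mul_mx_diag !mxE; congr (_ * _); exact: mulrC.
Qed.

Lemma gram_form_ge0 (U J : finType) (c : J -> C) (X : J -> U -> C)
  (A : Mat C U) : (forall f, 0 <= c f) ->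
  (forall s t, A s t = \sum_f c f * (X f s)^* * X f t) ->
  forall v : U -> C, 0 <= \sum_(s : U) \sum_(t : U) (v s)^* * A s t * v t.
Proof.
move=> c_ge0 HA v.
have -> : \sum_(s : U) \sum_(t : U) (v s)^* * A s t * v t =
   \sum_f c f * ((\sum_s X f s * v s)^* * (\sum_t X f t * v t)).
  transitivity (\sum_s \sum_t \sum_f c f * ((X f s * v s)^* * (X f t * v t))).
    apply: eq_bigr => s _; apply: eq_bigr => t _.
    rewrite HA big_distrr big_distrl /=; apply: eq_bigr => f _.
    rewrite rmorphM /= !mulrA; congr (_ * _ * _).
    by rewrite -mulrA mulrC.
  under eq_bigr do rewrite exchange_big /=.
  rewrite exchange_big /=; apply: eq_bigr => f _.
  rewrite rmorph_sum /= big_distrl /= big_distrr /=; apply: eq_bigr => s _.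
  by rewrite !big_distrr /=; apply: eq_bigr => t _; rewrite mulrA.
apply: sumr_ge0 => f _; apply: mulr_ge0 => //.
by rewrite mulrC; exact: mul_conjC_ge0.
Qed.

Lemma wsum_density (U J : finType) (w : J -> C) (r : J -> Mat C U)
  (A : Mat C U) :
  (forall j, 0 <= w j) -> \sum_j w j = 1 -> (forall j, density (r j)) ->
  (forall s t, A s t = \sum_j w j * r j s t) -> density A.
Proof.
move=> w_ge0 w_sum1 Hr HA; split; last first.
  rewrite /mtr; under eq_bigr do rewrite HA.
  rewrite exchange_big /= -w_sum1; apply: eq_bigr => j _.
  by rewrite -big_distrr /=; case: (Hr j) => _; rewrite /mtr => ->; rewrite mulr1.
split.
  move=> s t; rewrite !HA rmorph_sum; apply: eq_bigr => j _.
  rewrite rmorphM /= (conj_Creal (ger0_real (w_ge0 j))).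
  by case: (Hr j) => [[-> _] _].
move=> v.
have -> : \sum_(s : U) \sum_(t : U) (v s)^* * A s t * v t =
   \sum_j w j * \sum_(s : U) \sum_(t : U) (v s)^* * r j s t * v t.
  transitivity (\sum_s \sum_t \sum_j w j * ((v s)^* * r j s t * v t)).
    apply: eq_bigr => s _; apply: eq_bigr => t _.
    rewrite HA big_distrr big_distrl /=; apply: eq_bigr => j _.
    by rewrite !mulrA [_ * w j]mulrC.
  under eq_bigr do rewrite exchange_big /=.
  rewrite exchange_big /=; apply: eq_bigr => j _.
  by rewrite big_distrr /=; apply: eq_bigr => s _; rewrite big_distrr.
apply: sumr_ge0 => j _; apply: mulr_ge0 => //.
by case: (Hr j) => [[_ ->] _].
Qed.

Definition mix (U : finType) (p : C) (A B : Mat C U) : Mat C U :=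
  madd (mscale p A) (mscale (1 - p) B).

Lemma mix_density (U : finType) (p : C) (A B : Mat C U) :
  density A -> density B -> 0 <= p <= 1 -> density (mix p A B).
Proof.
move=> HA HB /andP[p_ge0 p_le1].
apply: (@wsum_density U bool (fun b => if b then p else 1 - p)
   (fun b => if b then A else B)).
- by case => //; rewrite subr_ge0.
- by rewrite big_bool /= addrC subrK.
- by case.
- by move=> s t; rewrite big_bool.
Qed.

End PositiveMatrices.

Section SeparableStates.
Variables (C : numClosedFieldType) (I : finType) (L : I -> finType).

(* A tensor product of density matrices is a density matrix: its trace
   factorizes, and its Gram form is the product of the factors' forms. *)
Lemma product_density (rho : Mat C (T L)) : product_state rho -> density rho.
Proof.
move=> [r [Hr Hrho]]; split; last first.
  rewrite /mtr; under eq_bigr do rewrite Hrho.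
  rewrite -(prod_sum_dep (fun i (a : L i) => r i a a)).
  by rewrite big1 // => i _; case: (Hr i).
split.
  move=> s t; rewrite !Hrho rmorph_prod; apply: eq_bigr => i _.
  by case: (Hr i) => [[-> _] _].
have Hdec i := psd_decomp (proj1 (Hr i)).
pose d i := projT1 (Hdec i).
pose Q i := proj1_sig (projT2 (Hdec i)).
have HQ i : (forall k, 0 <= d i k) /\
            forall a b, r i a b = \sum_k d i k * (Q i k a)^* * Q i k b.
  exact: (proj2_sig (projT2 (Hdec i))).
apply: (@gram_form_ge0 C (T L) {dffun forall i, 'I_#|L i|}
   (fun f => \prod_i d i (f i)) (fun f s => \prod_i Q i (f i) (s i))).
  by move=> f; apply: prodr_ge0 => i _; exact: (proj1 (HQ i)).
move=> s t; rewrite Hrho.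
under eq_bigr do rewrite (proj2 (HQ _)).
rewrite prod_sum_dep; apply: eq_bigr => f _.
by rewrite rmorph_prod /= -!big_split.
Qed.

Lemma separable_density (rho : Mat C (T L)) : separable rho -> density rho.
Proof.
move=> [n [p [r [p_ge0 [p_sum1 [Hr Hrho]]]]]].
apply: (@wsum_density C (T L) 'I_n p r) => // j.
exact: product_density.
Qed.

End SeparableStates.

Section Infima.
Variable C : numClosedFieldType.

Lemma Inf_eq (A : C -> Prop) (m : C) : is_inf A m -> Inf A = m.
Proof.
move=> Hm.
have HI : is_inf A (Inf A) := epsilon_spec (inhabits 0) (is_inf A) (ex_intro _ m Hm).
apply/le_anti/andP; split; [exact: (proj2 Hm _ (proj1 HI)) | exact: (proj2 HI _ (proj1 Hm))].
Qed.

Lemma Inf_spec (Hcompl : real_complete C) (A : C -> Prop) :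
  (exists a, A a) -> (forall a, A a -> 0 <= a) -> is_inf A (Inf A).
Proof.
move=> Hne Hlb.
have [m Hm] := Hcompl A Hne (ex_intro _ 0 (conj (real0 _) Hlb)).
by rewrite (Inf_eq Hm).
Qed.

Lemma unit_ratio (a f : C) : 0 <= a <= f -> exists q, 0 <= q <= 1 /\ q * f = a.
Proof.
case/andP=> a_ge0 a_le_f; have [f0 | f_neq0] := eqVneq f 0.
  exists 0; rewrite lexx ler01 mul0r; split => //.
  by apply/le_anti; rewrite a_ge0 -f0 a_le_f.
have f_gt0 : 0 < f by rewrite lt_def f_neq0 (le_trans a_ge0 a_le_f).
exists (a / f); rewrite divfK // divr_ge0 ?(ltW f_gt0) //.
by rewrite ler_pdivrMr // mul1r.
Qed.

End Infima.

Section ClosestSeparable.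
Variables (C : numClosedFieldType) (I : finType) (L : I -> finType).
Local Notation State := (Mat C (T L)).
Variables (E : State -> C) (D : State -> State -> C).

Definition closest (tau sigma : State) : Prop :=
  separable sigma /\ forall sigma', separable sigma' -> D tau sigma <= D tau sigma'.

Lemma ED_closest (tau sigma : State) : closest tau sigma -> ED D tau = D tau sigma.
Proof.
move=> [Hsep Hmin]; apply: Inf_eq; split; first by move=> _ [s' [Hs' ->]]; exact: Hmin.
by move=> b Hb; apply: Hb; exists sigma.
Qed.

Hypothesis HDmet : metric_on_states D.
Hypothesis HDconv : convex_each_arg D.
Hypothesis HDatt : forall tau, density tau -> exists sigma, closest tau sigma.
Hypothesis HEconv : convex_measure E.
Hypothesis HEweak : weak_ent_measure E.

Lemma ED_lipschitz (rho sigma : State) : density rho -> density sigma ->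
  ED D rho <= D rho sigma + ED D sigma.
Proof.
move=> Hrho Hsigma.
have [s0 [Hs0 Hs0min]] := HDatt Hrho.
have [s1 Hs1] := HDatt Hsigma.
rewrite (ED_closest (conj Hs0 Hs0min)) (ED_closest Hs1).
apply: le_trans (Hs0min _ (proj1 Hs1)) _.
have [_ [_ [_ Htri]]] := HDmet.
exact: Htri (separable_density (proj1 Hs1)).
Qed.

Section Mixture.
Variables (r sr : State) (q : C).
Hypotheses (Hr : density r) (Hsr : closest r sr) (Hq : 0 <= q <= 1).
Let Hsr_density : density sr := separable_density (proj1 Hsr).

Lemma mix_closest_dist : D r (mix q r sr) <= (1 - q) * D r sr.
Proof.
have [_ [Hzero _]] := HDmet.
have Drr : D r r = 0 by apply/(Hzero _ _ Hr Hr).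
by have := (proj2 HDconv) q r r sr Hr Hr Hsr_density Hq; rewrite Drr mulr0 add0r.
Qed.

(* By convexity, and since E vanishes on sr, E scales down at least by q. *)
Lemma mix_closest_E : E (mix q r sr) <= q * E r.
Proof.
have := @HEconv q r sr Hr Hsr_density Hq.
by rewrite ((proj1 HEweak) _ (proj1 Hsr)) mulr0 addr0.
Qed.

(* The distance-based entanglement of the mixture is exactly q E_D(r):
   sr bounds it from above by convexity, Lipschitz continuity from below. *)
Lemma mix_closest_ED : ED D (mix q r sr) = q * D r sr.
Proof.
have Ht := mix_density Hr Hsr_density Hq.
have [st Hst] := HDatt Ht.
have [_ [Hzero _]] := HDmet.
have Dss : D sr sr = 0 by apply/(Hzero _ _ Hsr_density Hsr_density).
apply/le_anti/andP; split.
  rewrite (ED_closest Hst); apply: le_trans ((proj2 Hst) _ (proj1 Hsr)) _.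
  have := (proj1 HDconv) q r sr sr Hr Hsr_density Hsr_density Hq.
  by rewrite Dss mulr0 addr0.
have := ED_lipschitz Hr Ht; rewrite (ED_closest Hsr) => Hlip.
have := le_trans Hlip (lerD mix_closest_dist (lexx (ED D (mix q r sr)))).
by rewrite -lerBlDl mulrBl mul1r opprB addrC subrK.
Qed.

End Mixture.

Lemma descend (r : State) (a : C) : density r -> 0 <= a <= ED D r ->
  exists2 q, 0 <= q <= 1 /\ q * ED D r = a &
    exists tau, [/\ density tau, ED D tau = a, D r tau <= ED D r - a
                   & E tau <= q * E r].
Proof.
move=> Hr Ha; have [sr Hsr] := HDatt Hr.
have [q [Hq qf]] := unit_ratio Ha.
exists q => //.
exists (mix q r sr); rewrite -qf (ED_closest Hsr); split.
- exact: mix_density Hr (separable_density (proj1 Hsr)) Hq.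
- exact: mix_closest_ED.
- by have := mix_closest_dist Hr Hsr Hq; rewrite mulrBl mul1r.
- exact: mix_closest_E.
Qed.

Lemma level_set_below (rho sigma : State) (eps : C) :
  (forall tau, density tau -> 0 <= E tau) ->
  density rho -> density sigma -> 0 <= eps <= ED D rho -> D rho sigma <= eps ->
  exists tau, [/\ density tau, ED D tau = ED D rho - eps & E tau <= E sigma].
Proof.
move=> HEnn Hrho Hsigma /andP[eps_ge0 eps_le] Hdist.
have Hlevel : 0 <= ED D rho - eps <= ED D sigma.
  rewrite subr_ge0 eps_le lerBlDl /=.
  by apply: le_trans (ED_lipschitz Hrho Hsigma) _; rewrite lerD2r.
have [q [/andP[_ q_le1] _] [tau [Htau EDtau _ Etau]]] := descend Hsigma Hlevel.
exists tau; split => //; apply: le_trans Etau _.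
by apply: ler_piMl => //; exact: HEnn.
Qed.

End ClosestSeparable.

Theorem mainTheorem9 (C : numClosedFieldType) (I : finType) (L : I -> finType)
  (E : Mat C (T L) -> C) (D : Mat C (T L) -> Mat C (T L) -> C)
  (Hcompl : real_complete C)
  (HEnn : forall rho, density rho -> 0 <= E rho)
  (HEconv : convex_measure E)
  (HEweak : weak_ent_measure E)
  (HDmet : metric_on_states D)
  (HDcontr : contractive D)
  (HDconv : convex_each_arg D)
  (HDatt : forall rho, density rho ->
     exists sigma, separable sigma /\
       forall sigma', separable sigma' -> D rho sigma <= D rho sigma')
  (rho : Mat C (T L)) (eps : C)
  (Hrho : density rho) (HEDpos : 0 < ED D rho)
  (Heps : 0 <= eps <= ED D rho) :
  (exists tau, density tau /\ ED D tau = ED D rho - eps) /\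
  Inf (fun x => exists tau, density tau /\ ED D tau = ED D rho - eps /\ x = E tau)
    <= Eeps E D eps rho /\
  Eeps E D eps rho <= (1 - eps / ED D rho) * E rho.
Proof.
have Hclosest : forall tau, density tau -> exists sigma, closest D tau sigma := HDatt.
set e := ED D rho in HEDpos Heps *.
have Hlevel : 0 <= e - eps <= e.
  by case/andP: Heps => eps_ge0 eps_le; rewrite subr_ge0 eps_le gerDl oppr_le0.
(* the level set is reached from rho itself, within distance eps *)
have [q [_ qe] [t [Ht EDt Drt Et]]] :=
  descend HDmet HDconv Hclosest HEconv HEweak Hrho Hlevel.
rewrite subKr in Drt.
have e_neq0 : e != 0 by rewrite gt_eqF.
have -> : 1 - eps / e = q by rewrite -(mulfK e_neq0 q) qe mulrBl divff.
pose level x := exists tau, density tau /\ ED D tau = e - eps /\ x = E tau.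
pose near x := exists sigma, density sigma /\ D rho sigma <= eps /\ x = E sigma.
have Inf_level : is_inf level (Inf level).
  by apply: Inf_spec => //; [exists (E t), t | move=> _ [tau [? [_ ->]]]; exact: HEnn].
have Inf_near : is_inf near (Eeps E D eps rho).
  by apply: Inf_spec => //; [exists (E t), t | move=> _ [tau [? [_ ->]]]; exact: HEnn].
split; first by exists t.
split; last exact: le_trans (proj1 Inf_near _ (ex_intro _ t (conj Ht (conj Drt erefl)))) Et.
apply: (proj2 Inf_near) => _ [sigma [Hsigma [Hdist ->]]].
have [tau [Htau EDtau Etau]] :=
  level_set_below HDmet HDconv Hclosest HEconv HEweak HEnn Hrho Hsigma Heps Hdist.
exact: le_trans (proj1 Inf_level _ (ex_intro _ tau (conj Htau (conj EDtau erefl)))) Etau.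
Qed.
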